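(* Let $F(x)=x^4+ax^3+bx+c\in\mathbb{Z}[x]$ be irreducible over $\mathbb{Q}$, $\alpha$ a root of $F$ and $K=\mathbb{Q}(\alpha)$. If any of the following holds: (1) $a\equiv1\pmod8$, $b\equiv3\pmod8$ and $c\equiv7\pmod8$; (2) $a\equiv5\pmod8$ and $b\equiv c\equiv3\pmod 8$ or $b\equiv c\equiv 7\pmod8$; (3) $a\equiv c\equiv7\pmod8$ and $b\equiv5\pmod8$; then $K$ is not monogenic.
   Context: $K$ is monogenic if its ring of integers $\mathcal{O}_K$ equals $\mathbb{Z}[\theta]$ for some $\theta\in\mathcal{O}_K$. *)

From mathcomp Require Import all_boot all_order all_algebra all_field.
Set Implicit Arguments. Unset Strict Implicit. Unset Printing Implicit Defensive.
Import GRing.Theory Num.Theory.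
Local Open Scope ring_scope.

(* Number field K = Q(alpha), realised inside the algebraic numbers algC:
   the elements p(alpha) with p a rational polynomial. *)
Definition in_Qadj (alpha x : algC) : Prop :=
  exists p : {poly rat}, x = (map_poly ratr p).[alpha].

Definition in_ring_of_integers (alpha x : algC) : Prop :=
  in_Qadj alpha x /\ x \in Aint.

Definition in_Zadj (theta x : algC) : Prop :=
  exists p : {poly int}, x = (map_poly intr p).[theta].

Definition monogenic (alpha : algC) : Prop :=
  exists theta : algC, in_ring_of_integers alpha theta /\
    forall x : algC, in_ring_of_integers alpha x <-> in_Zadj theta x.

From mathcomp Require Import all_boot all_order all_algebra all_field.
From mathcomp Require Import ring zify.
Set Implicit Arguments.
Unset Strict Implicit.
Unset Printing Implicit Defensive.
Import GRing.Theory Num.Theory.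
Local Open Scope ring_scope.

(* The congruences imply that a, u := (3a + b + 4)/2 and v := (1 + a + b + c)/4 are
   odd integers; y := alpha - 1 is then a root of
   Y^4 + (a+4) Y^3 + (3a+6) Y^2 + 2u Y + 4v.  The element
   t := (y^3 + (a+4) y^2 + (3a+6) y)/2 + u is integral, y t = -2v, and
   t^2 - u t + v(3a+6) + v y^2 + v(a+4) y = 0, whereas y/2 and t/2 are not integral.
   If O_K = Z[theta] with y = g(theta) and t = h(theta), reduce modulo 2 and modulo the
   minimal polynomial M of theta: in F_2[X], M divides g h and g^2 + g + h^2 + h + 1
   but neither g nor h.  This cannot happen when deg M <= 4. *)

Local Notation pQtoC := (map_poly (ratr : rat -> algC)).
Local Notation pZtoC := (map_poly (intr : int -> algC)).
Local Notation pZtoF2 := (map_poly (intr : int -> 'F_2)).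

Lemma F2_cases (s : 'F_2) : s = 0 \/ s = 1.
Proof. by case: s => [[|[|n]] Hn] //=; [left|right]; apply/val_inj. Qed.

Lemma coprimep_sqr_add1 (F : fieldType) (p : {poly F}) : coprimep p (p ^+ 2 + p + 1).
Proof.
apply/Bezout_coprimepP; exists (- (p + 1), 1).
by rewrite (_ : - (p + 1) * p + 1 * (p ^+ 2 + p + 1) = 1) ?eqpxx //; ring.
Qed.

Lemma F2_dvdp_sqr_add1_noroot (p P : {poly 'F_2}) (r : 'F_2) :
  p %| P ^+ 2 + P + 1 -> ~~ root p r.
Proof.
move=> /root_dvdp dvd; apply/negP => /dvd; rewrite /root !hornerE.
by case: (F2_cases P.[r]) => ->.
Qed.

Lemma F2_noroot_size3 (p : {poly 'F_2}) :
  size p = 3 -> (forall r, ~~ root p r) -> p = 'X^2 + 'X + 1.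
Proof.
move=> sp noroot.
have c2 : p`_2 = 1.
  have : lead_coef p != 0 by rewrite lead_coef_eq0 -size_poly_eq0 sp.
  rewrite lead_coefE sp.
  by case: (F2_cases p`_2) => ->.
have c0 : p`_0 = 1.
  by move: (noroot 0); rewrite /root horner_coef0; case: (F2_cases p`_0) => ->.
have c1 : p`_1 = 1.
  move: (noroot 1); rewrite /root horner_coef sp !big_ord_recr big_ord0 /=.
  by rewrite !expr1n !mulr1 add0r c0 c2; case: (F2_cases p`_1) => ->.
apply/polyP => -[|[|[|i]]]; rewrite !coefE /= ?c0 ?c1 ?c2 ?addr0 ?add0r //.
by rewrite nth_default ?sp.
Qed.

Lemma F2_dvdp_sqr_add1_size_neq2 (p P : {poly 'F_2}) :
  p %| P ^+ 2 + P + 1 -> size p != 2.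
Proof.
move=> dvd; apply/eqP => /poly2_root[r]; apply/negP.
exact: F2_dvdp_sqr_add1_noroot dvd.
Qed.

Lemma F2_dvdp_sqr_add1_size3 (p P : {poly 'F_2}) :
  p %| P ^+ 2 + P + 1 -> size p = 3 -> p = 'X^2 + 'X + 1.
Proof.
by move=> dvd sp; apply: F2_noroot_size3 => // r; apply: F2_dvdp_sqr_add1_noroot dvd.
Qed.

(* Otherwise the coprime factors gcd(M, Y) and gcd(M, Y^2 + Y + 1) of M are both
   nonconstant and divide polynomials of the form P^2 + P + 1, which have no root in
   F_2; degree <= 4 then forces both to be X^2 + X + 1. *)
Lemma F2_dvdp_conic (M Y T : {poly 'F_2}) : M != 0 -> (size M <= 5)%N ->
  M %| Y * T -> M %| Y ^+ 2 + Y + T ^+ 2 + T + 1 -> (M %| Y) || (M %| T).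
Proof.
move=> M0 sM dYT dconic; apply/norP => -[nY nT].
pose W := Y ^+ 2 + Y + 1; pose M1 := gcdp M Y; pose M2 := gcdp M W.
have dYW : M %| Y * W.
  rewrite (_ : Y * W = Y * (Y ^+ 2 + Y + T ^+ 2 + T + 1) - Y * T * (T + 1)).
    by apply: dvdp_sub; [apply: dvdp_mull | apply: dvdp_mulr].
  by rewrite /W; ring.
have dM1 : M1 %| T ^+ 2 + T + 1.
  rewrite (_ : T ^+ 2 + T + 1 = Y ^+ 2 + Y + T ^+ 2 + T + 1 - Y * (Y + 1)); last by ring.
  apply: dvdp_sub; first exact: dvdp_trans (dvdp_gcdl M Y) dconic.
  by apply: dvdp_mulr; apply: dvdp_gcdr.
have dM2 : M2 %| Y ^+ 2 + Y + 1 by apply: dvdp_gcdr.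
have M12 : coprimep M1 M2.
  apply: (coprimep_dvdl (dvdp_gcdr M W)); apply: (coprimep_dvdr (dvdp_gcdr M Y)).
  exact: coprimep_sqr_add1.
have sM12 : (size (M1 * M2)%R <= 5)%N.
  by apply: leq_trans sM; apply: dvdp_leq; rewrite // Gauss_dvdp // !dvdp_gcdl.
have sM1 : (1 < size M1)%N.
  rewrite ltn_neqAle lt0n size_poly_eq0 gcdp_eq0 (negPf M0) andbT eq_sym -coprimep_def.
  by apply: contra nT => cMY; rewrite -(Gauss_dvdpr _ cMY).
have sM2 : (1 < size M2)%N.
  rewrite ltn_neqAle lt0n size_poly_eq0 gcdp_eq0 (negPf M0) andbT eq_sym -coprimep_def.
  by apply: contra nY => cMW; rewrite -(Gauss_dvdpl _ cMW).
have [e1 e2] : size M1 = 3 /\ size M2 = 3.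
  have := F2_dvdp_sqr_add1_size_neq2 dM1; have := F2_dvdp_sqr_add1_size_neq2 dM2.
  move: sM12; rewrite size_mul -?size_poly_gt0 ?(ltnW sM1) ?(ltnW sM2) //.
  by move: (size M1) (size M2) sM1 sM2 => m1 m2; lia.
move: M12; rewrite (F2_dvdp_sqr_add1_size3 dM1 e1) (F2_dvdp_sqr_add1_size3 dM2 e2).
by rewrite coprimepp -(F2_dvdp_sqr_add1_size3 dM1 e1) e1.
Qed.

Lemma intr_F2 (z : int) : (z%:~R : 'F_2) = ((z %% 2)%Z)%:~R.
Proof.
rewrite {1}(divz_eq z 2) rmorphD rmorphM /=.
by rewrite (_ : (2 : int)%:~R = 0 :> 'F_2) ?mulr0 ?add0r //; apply/val_inj.
Qed.

Lemma intr_F2_odd (z : int) : (z %% 2 = 1)%Z -> (z%:~R : 'F_2) = 1.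
Proof. by move=> z_odd; rewrite intr_F2 z_odd. Qed.

Lemma intr_F2_even (z : int) : (z %% 2 = 0)%Z -> (z%:~R : 'F_2) = 0.
Proof. by move=> z_even; rewrite intr_F2 z_even. Qed.

Lemma intr_F2_eq0 (z : int) : (z%:~R : 'F_2) = 0 -> (z %% 2 = 0)%Z.
Proof.
rewrite intr_F2; have : (0 <= z %% 2 < 2)%Z by rewrite modz_ge0 // ltz_pmod.
by case: (z %% 2)%Z => [[|[|n]]|n].
Qed.

Lemma pZtoF2_surj (s : {poly 'F_2}) : exists h : {poly int}, pZtoF2 h = s.
Proof.
exists (map_poly (fun x : 'F_2 => (x : nat)%:Z) s).
apply/polyP => i; rewrite coef_map /= coef_map_id0 //.
by case: s`_i => -[|[|]] // lt; apply/val_inj.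
Qed.

Lemma pZtoF2_eq0 (d : {poly int}) : pZtoF2 d = 0 -> exists r, d = 2%:P * r.
Proof.
move=> d0; exists (map_poly (fun z : int => (z %/ 2)%Z) d).
apply/polyP => i; rewrite coefCM coef_map_id0 //.
have /intr_F2_eq0 d_even : ((d`_i)%:~R : 'F_2) = 0 by rewrite -coef_map d0 coef0.
by rewrite {1}(divz_eq d`_i 2) d_even addr0 mulrC.
Qed.

Lemma pQtoC_intr (p : {poly int}) : pQtoC (map_poly intr p) = pZtoC p.
Proof. by rewrite -map_poly_comp; apply: eq_map_poly => z /=; rewrite ratr_int. Qed.

Lemma size_minCpoly_root (p : {poly rat}) (x : algC) :
  p != 0 -> root (pQtoC p) x -> (size (minCpoly x) <= size p)%N.
Proof.
have [q [Dq _] dvd] := minCpolyP x.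
by move=> p0; rewrite dvd Dq size_map_poly => /dvdp_leq; apply.
Qed.

Lemma minCpoly_irreducible (P : {poly rat}) (x : algC) :
  irreducible_poly P -> P \is monic -> root (pQtoC P) x -> minCpoly x = pQtoC P.
Proof.
move=> [_ P_irr] P_monic Px; have [q [Dq q_monic] dvd] := minCpolyP x.
have sq : size q != 1.
  by have := size_minCpoly x; rewrite Dq size_map_poly; case: (size q) => [|[|]].
have /(P_irr q sq) : q %| P by rewrite -dvd.
by rewrite Dq eqp_monic // => /eqP ->.
Qed.

Lemma Aint_minCpoly_coef_int (x : algC) (P : {poly rat}) :
  x \in Aint -> P \is monic -> root (pQtoC P) x -> size (minCpoly x) = size P ->
  P \is a polyOver Num.int.
Proof.
move=> xA P_monic Px sP; have [q [Dq q_monic] dvd] := minCpolyP x.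
have : q %= P.
  by rewrite -dvdp_size_eqp -?dvd // -(size_map_poly (ratr : rat -> algC)) -Dq sP.
rewrite eqp_monic // => /eqP qP; apply/polyOverP => i.
by move: xA => /polyOverP/(_ i); rewrite Dq qP coef_map Cint_rat.
Qed.

Lemma Aint_minCpoly_int (x : algC) : x \in Aint ->
  exists2 mZ : {poly int}, minCpoly x = pZtoC mZ & mZ \is monic.
Proof.
move=> /floorpP[mZ DmZ]; exists mZ => //; move: (minCpoly_monic x).
rewrite DmZ !monicE lead_coef_map_inj //; last exact: intr_inj.
by rewrite -(inj_eq (@intr_inj algC)).
Qed.

Lemma minCpoly_int_dvdp (x : algC) (mZ h : {poly int}) :
  minCpoly x = pZtoC mZ -> mZ \is monic -> (pZtoC h).[x] = 0 -> h = h %/ mZ * mZ.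
Proof.
move=> DmZ mZ_monic hx; have mZ0 := monic_neq0 mZ_monic.
have Eh := Pdiv.IdomainMonic.divp_eq mZ_monic h.
have rx : root (pQtoC (map_poly intr (h %% mZ))) x.
  have mZx : (pZtoC mZ).[x] = 0 by rewrite -DmZ; apply/eqP/root_minCpoly.
  by rewrite pQtoC_intr /root -hx {2}Eh rmorphD rmorphM /= !hornerE mZx mulr0 add0r.
have szQ (r : {poly int}) : size (map_poly intr r : {poly rat}) = size r.
  by apply: size_map_inj_poly; [apply: intr_inj | apply: mulr0z].
suff r0 : h %% mZ = 0 by rewrite {1}Eh r0 addr0.
apply/eqP; apply: contraT => r0; have := size_minCpoly_root _ rx.
rewrite -size_poly_eq0 szQ size_poly_eq0 r0 DmZ size_map_inj_poly ?szQ //.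
  by rewrite leqNgt ltn_modp mZ0 => /(_ isT).
exact: intr_inj.
Qed.

Lemma Aint_half_horner (x : algC) (mZ h : {poly int}) :
  minCpoly x = pZtoC mZ -> x \in Aint -> pZtoF2 mZ %| pZtoF2 h ->
  (pZtoC h).[x] / 2 \in Aint.
Proof.
move=> DmZ xA /dvdpP[s Es]; have [q Dq] := pZtoF2_surj s.
have [r Dr] : exists r, h - q * mZ = 2%:P * r.
  by apply: pZtoF2_eq0; rewrite rmorphB rmorphM /= Dq Es subrr.
have mZx : (pZtoC mZ).[x] = 0 by rewrite -DmZ; apply/eqP/root_minCpoly.
have -> : (pZtoC h).[x] = 2 * (pZtoC r).[x].
  rewrite -[h](subrK (q * mZ)) Dr rmorphD !rmorphM /= hornerD !hornerM mZx mulr0 addr0.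
  by rewrite map_polyC hornerC.
rewrite mulrC mulKf ?pnatr_eq0 //; apply: rpred_horner => //.
by apply/polyOverP => i; rewrite coef_map Aint_int.
Qed.

Lemma exists_rV_mulmx_eq0 (F : fieldType) m n (A : 'M[F]_(m, n)) :
  (n < m)%N -> exists2 u : 'rV_m, u != 0 & u *m A = 0.
Proof.
move=> lt_nm; have : kermx A != 0.
  rewrite kermx_eq0 /row_free; apply: contraTneq lt_nm => <-.
  by rewrite -leqNgt rank_leq_col.
by case/rowV0Pn => u /sub_kermxP uA u0; exists u.
Qed.

(* The powers 1, g, ..., g^k of g = p(d), reduced modulo the minimal polynomial
   of d (of degree k), are k+1 vectors in a k-dimensional space. *)
Lemma size_minCpoly_horner (d : algC) (p : {poly rat}) :
  (size (minCpoly (pQtoC p).[d]) <= size (minCpoly d))%N.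
Proof.
have [m [Dm m_monic] _] := minCpolyP d; have m0 := monic_neq0 m_monic.
have md : root (pQtoC m) d by rewrite -Dm root_minCpoly.
rewrite [minCpoly d]Dm size_map_poly.
have [k sm] : exists k, size m = k.+1.
  by exists (size m).-1; rewrite prednK // size_poly_gt0.
pose A : 'M[rat]_(k.+1, k) := \matrix_(i < k.+1) poly_rV (p ^+ i %% m).
have [u u0 uA] := exists_rV_mulmx_eq0 A (ltnSn k).
have rowA j : rVpoly (row j A) = p ^+ j %% m.
  by rewrite rowK poly_rV_K //; have := ltn_modp (p ^+ j) m; rewrite m0 sm.
apply: (@leq_trans (size (rVpoly u))); last by rewrite sm; apply: size_poly.
apply: size_minCpoly_root.
  by apply: contra u0 => /eqP u0; rewrite -[u]rVpolyK u0 linear0.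
have -> : rVpoly u = \sum_(j < k.+1) u 0 j *: 'X^j.
  rewrite {1}(row_sum_delta u) linear_sum; apply: eq_bigr => j _.
  by rewrite linearZ /= rVpoly_delta.
apply/eqP; transitivity (pQtoC (rVpoly (u *m A))).[d]; last first.
  by rewrite uA linear0 rmorph0 horner0.
rewrite mulmx_sum_row !linear_sum !horner_sum; apply: eq_bigr => j _ /=.
rewrite [rVpoly _]linearZ /= rowA !map_polyZ !hornerZ map_polyXn hornerXn.
by rewrite map_modp horner_mod // rmorphXn horner_exp.
Qed.

Lemma in_Qadj_X (d : algC) : in_Qadj d d.
Proof. by exists 'X; rewrite map_polyX hornerX. Qed.

Lemma in_Qadj_rat (d : algC) (r : rat) : in_Qadj d (ratr r).
Proof. by exists r%:P; rewrite map_polyC hornerC. Qed.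

Lemma in_Qadj_1 (d : algC) : in_Qadj d 1.
Proof. by rewrite -(rmorph1 ratr); apply: in_Qadj_rat. Qed.

Lemma in_Qadj_int (d : algC) (z : int) : in_Qadj d z%:~R.
Proof. by rewrite -(ratr_int _ z); apply: in_Qadj_rat. Qed.

Lemma in_Qadj_nat (d : algC) (n : nat) : in_Qadj d n%:R.
Proof. by rewrite -(ratr_nat _ n); apply: in_Qadj_rat. Qed.

Lemma in_Qadj_Vint (d : algC) (z : int) : in_Qadj d (z%:~R)^-1.
Proof. by rewrite -(ratr_int _ z) -fmorphV; apply: in_Qadj_rat. Qed.

Lemma in_Qadj_Vnat (d : algC) (n : nat) : in_Qadj d (n%:R)^-1.
Proof. by rewrite -(ratr_nat _ n) -fmorphV; apply: in_Qadj_rat. Qed.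

Lemma in_QadjD (d x y : algC) : in_Qadj d x -> in_Qadj d y -> in_Qadj d (x + y).
Proof. by move=> [p ->] [q ->]; exists (p + q); rewrite rmorphD hornerD. Qed.

Lemma in_QadjN (d x : algC) : in_Qadj d x -> in_Qadj d (- x).
Proof. by move=> [p ->]; exists (- p); rewrite rmorphN hornerN. Qed.

Lemma in_QadjB (d x y : algC) : in_Qadj d x -> in_Qadj d y -> in_Qadj d (x - y).
Proof. by move=> ? ?; apply/in_QadjD/in_QadjN. Qed.

Lemma in_QadjM (d x y : algC) : in_Qadj d x -> in_Qadj d y -> in_Qadj d (x * y).
Proof. by move=> [p ->] [q ->]; exists (p * q); rewrite rmorphM hornerM. Qed.

Lemma in_QadjX (d x : algC) (n : nat) : in_Qadj d x -> in_Qadj d (x ^+ n).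
Proof. by move=> [p ->]; exists (p ^+ n); rewrite rmorphXn horner_exp. Qed.

Ltac in_Qadj := repeat first
  [ apply: in_Qadj_X | apply: in_Qadj_1 | apply: in_Qadj_int | apply: in_Qadj_nat
  | apply: in_Qadj_Vint | apply: in_Qadj_Vnat | apply: in_QadjD | apply: in_QadjB
  | apply: in_QadjM | apply: in_QadjN | apply: in_QadjX ].

Lemma size_minCpoly_Qadj (d x : algC) :
  in_Qadj d x -> (size (minCpoly x) <= size (minCpoly d))%N.
Proof. by move=> [p ->]; apply: size_minCpoly_horner. Qed.

Lemma size_minCpoly_Qadj_eq (d x : algC) :
  in_Qadj d x -> in_Qadj x d -> size (minCpoly x) = size (minCpoly d).
Proof. by move=> dx xd; apply/eqP; rewrite eqn_leq !size_minCpoly_Qadj. Qed.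

Definition quartic (R : nzRingType) (c0 c1 c2 c3 : R) : {poly R} :=
  Poly [:: c0; c1; c2; c3; 1].

Section Quartic.
Variables (R : nzRingType) (c0 c1 c2 c3 : R).

Lemma quarticE :
  quartic c0 c1 c2 c3 = 'X^4 + c3%:P * 'X^3 + c2%:P * 'X^2 + c1%:P * 'X + c0%:P.
Proof.
apply/polyP => i; rewrite coef_Poly !coefD !coefCM !coefXn coefX coefC.
by case: i => [|[|[|[|[|i]]]]] /=; rewrite ?mulr0 ?mulr1 ?addr0 ?add0r // nth_nil.
Qed.

Lemma quartic_seq : quartic c0 c1 c2 c3 = [:: c0; c1; c2; c3; 1] :> seq R.
Proof. by rewrite (@PolyK _ 1) //= oner_eq0. Qed.

Lemma size_quartic : size (quartic c0 c1 c2 c3) = 5.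
Proof. by rewrite quartic_seq. Qed.

Lemma quartic_monic : quartic c0 c1 c2 c3 \is monic.
Proof. by rewrite monicE lead_coefE quartic_seq. Qed.

Lemma map_quartic (S : nzRingType) (f : {rmorphism R -> S}) :
  map_poly f (quartic c0 c1 c2 c3) = quartic (f c0) (f c1) (f c2) (f c3).
Proof. by rewrite map_Poly /= rmorph1. Qed.

End Quartic.

Lemma horner_quartic (R : comNzRingType) (c0 c1 c2 c3 x : R) :
  (quartic c0 c1 c2 c3).[x] = x ^+ 4 + c3 * x ^+ 3 + c2 * x ^+ 2 + c1 * x + c0.
Proof. by rewrite /quartic !horner_cons hornerC; ring. Qed.

Lemma Aint_root_quartic (x : algC) (c0 c1 c2 c3 : int) :
  x ^+ 4 + c3%:~R * x ^+ 3 + c2%:~R * x ^+ 2 + c1%:~R * x + c0%:~R = 0 -> x \in Aint.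
Proof.
move=> x0; apply: (@root_monic_Aint (pZtoC (quartic c0 c1 c2 c3))).
- by rewrite /root map_quartic horner_quartic x0.
- exact/monic_map/quartic_monic.
- by apply/polyOverP => i; rewrite coef_map /= rpred_int.
Qed.

(* If [x] were integral, the quartic (its minimal polynomial, by degree) would have
   integer coefficients. *)
Lemma quartic_half_coef_notAint (x : algC) (k : int) (c0 c1 c2 : rat) :
  (k %% 2 = 1)%Z -> size (minCpoly x) = 5 ->
  x ^+ 4 + ratr (k%:~R / 2) * x ^+ 3 + ratr c2 * x ^+ 2 + ratr c1 * x + ratr c0 = 0 ->
  x \notin Aint.
Proof.
move=> k_odd sx x0; apply/negP => xA.
have /polyOverP/(_ 3) : quartic c0 c1 c2 (k%:~R / 2) \is a polyOver Num.int.
  apply: Aint_minCpoly_coef_int xA (quartic_monic _ _ _ _) _ _.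
    by rewrite /root map_quartic horner_quartic x0.
  by rewrite sx size_quartic.
rewrite quartic_seq /= => /intrP[m Dm].
have : k%:~R = (2 * m)%:~R :> rat by rewrite rmorphM /= -Dm mulrC mulfVK // pnatr_eq0.
by move/(@intr_inj rat) => Dk; move: k_odd; rewrite Dk; lia.
Qed.

Lemma F2_obstruction_not_monogenic (alpha y t : algC) (k k1 k2 k3 k4 : int) :
  (size (minCpoly alpha) <= 5)%N ->
  in_ring_of_integers alpha y -> in_ring_of_integers alpha t ->
  y / 2 \notin Aint -> t / 2 \notin Aint ->
  y * t = 2 * k%:~R ->
  t ^+ 2 + k1%:~R * t + k2%:~R + k3%:~R * y ^+ 2 + k4%:~R * y = 0 ->
  [/\ (k1 %% 2 = 1)%Z, (k2 %% 2 = 1)%Z, (k3 %% 2 = 1)%Z & (k4 %% 2 = 1)%Z] ->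
  ~ monogenic alpha.
Proof.
move=> deg_alpha yOK tOK y2 t2 Eyt Econic [o1 o2 o3 o4] [th [[thQ thA] Zth]].
have [hy Dy] : in_Zadj th y by apply/Zth.
have [ht Dt] : in_Zadj th t by apply/Zth.
have [mZ DmZ mZ_monic] := Aint_minCpoly_int thA.
pose M := pZtoF2 mZ; pose Y := pZtoF2 hy; pose T := pZtoF2 ht.
have dvdM (h : {poly int}) : (pZtoC h).[th] = 0 -> M %| pZtoF2 h.
  by move/(minCpoly_int_dvdp DmZ mZ_monic) => ->; rewrite rmorphM dvdp_mull.
have M0 : M != 0 by apply/monic_neq0/monic_map.
have sM : (size M <= 5)%N.
  rewrite size_map_poly_id0 ?(monicP mZ_monic) ?rmorph1 ?oner_eq0 //.
  rewrite -(size_map_inj_poly (@intr_inj algC)) ?mulr0z // -DmZ.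
  exact: leq_trans (size_minCpoly_Qadj thQ) deg_alpha.
have dYT : M %| Y * T.
  suff <- : pZtoF2 (hy * ht - (2 * k)%:P) = Y * T.
    apply: dvdM; rewrite rmorphB rmorphM /= map_polyC !hornerE -Dy -Dt Eyt.
    by rewrite /= intrM subrr.
  by rewrite rmorphB rmorphM /= map_polyC /= intr_F2_even ?subr0 //; lia.
have dconic : M %| Y ^+ 2 + Y + T ^+ 2 + T + 1.
  suff <- : pZtoF2 (ht ^+ 2 + k1%:P * ht + k2%:P + k3%:P * hy ^+ 2 + k4%:P * hy)
      = Y ^+ 2 + Y + T ^+ 2 + T + 1.
    apply: dvdM; rewrite !(rmorphD, rmorphM, rmorphXn) /= !map_polyC /=.
    by rewrite !(hornerD, hornerM, hornerC, horner_exp) -Dy -Dt.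
  rewrite !(rmorphD, rmorphM, rmorphXn) /= !map_polyC /= !intr_F2_odd //.
  by rewrite !mul1r; ring.
have := F2_dvdp_conic M0 sM dYT dconic; apply/negP; rewrite negb_or.
apply/andP; split.
  by apply: contra y2; rewrite Dy; apply: Aint_half_horner DmZ thA.
by apply: contra t2; rewrite Dt; apply: Aint_half_horner DmZ thA.
Qed.

Section ShiftedQuartic.
Variables (a u v : int) (alpha : algC).
Hypotheses (a_odd : (a %% 2 = 1)%Z) (u_odd : (u %% 2 = 1)%Z) (v_odd : (v %% 2 = 1)%Z).
Hypothesis deg_alpha : size (minCpoly alpha) = 5.

Local Notation A := (a%:~R : algC).
Local Notation U := (u%:~R : algC).
Local Notation V := (v%:~R : algC).

Let y := alpha - 1.
Hypothesis y_root :
  y ^+ 4 + (A + 4) * y ^+ 3 + (3 * A + 6) * y ^+ 2 + 2 * U * y + 4 * V = 0.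

(* By the quartic for [y], [t = -2v / y]; substituting [y = -2v / t] into that
   quartic yields a monic integral quartic for [t]. *)
Let t := (y ^+ 3 + (A + 4) * y ^+ 2 + (3 * A + 6) * y) / 2 + U.

Let V_neq0 : V != 0.
Proof. by rewrite intr_eq0; apply/eqP => v0; move: v_odd; rewrite v0. Qed.

Let y_neq0 : y != 0.
Proof.
apply/eqP => y0; move: y_root; rewrite y0 !expr0n /= !mulr0 !add0r => /eqP.
by rewrite mulf_eq0 (negPf V_neq0) pnatr_eq0.
Qed.

Let y_mul_t : y * t = 2 * (- v)%:~R.
Proof.
apply/eqP; rewrite rmorphN /= -subr_eq0 -(mul0r 2^-1) -y_root /t; apply/eqP.
by field.
Qed.

Let t_conic :
  t ^+ 2 + (- u)%:~R * t + (v * (3 * a + 6))%:~R + v%:~R * y ^+ 2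
    + (v * (a + 4))%:~R * y = 0.
Proof.
apply: (mulIf (expf_neq0 2 y_neq0)); rewrite mul0r -(mulr0 V) -y_root.
transitivity ((y * t) ^+ 2 - U * (y * t) * y + V * (3 * A + 6) * y ^+ 2
    + V * y ^+ 4 + V * (A + 4) * y ^+ 3).
  by rewrite !(rmorphN, rmorphM, rmorphD) /=; ring.
by rewrite y_mul_t rmorphN /=; ring.
Qed.

Let t_quartic :
  t ^+ 4 - U * t ^+ 3 + V * (3 * A + 6) * t ^+ 2 - 2 * V ^+ 2 * (A + 4) * t
    + 4 * V ^+ 3 = 0.
Proof.
have fourV_neq0 : 4 * V != 0 by rewrite mulf_neq0 ?pnatr_eq0.
apply: (mulfI fourV_neq0); rewrite mulr0 -(mulr0 (t ^+ 4)) -y_root.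
transitivity ((y * t) ^+ 4 + (A + 4) * (y * t) ^+ 3 * t
    + (3 * A + 6) * (y * t) ^+ 2 * t ^+ 2 + 2 * U * (y * t) * t ^+ 3 + 4 * V * t ^+ 4).
  by rewrite y_mul_t rmorphN /=; ring.
by ring.
Qed.

Let t_Aint : t \in Aint.
Proof.
apply: (@Aint_root_quartic _ (4 * v ^+ 3) (- (2 * v ^+ 2 * (a + 4)))
  (v * (3 * a + 6)) (- u)).
by rewrite -[RHS]t_quartic !(rmorphN, rmorphM, rmorphD, rmorphXn) /=; ring.
Qed.

Let y_Aint : y \in Aint.
Proof.
apply: (@Aint_root_quartic _ (4 * v) (2 * u) (3 * a + 6) (a + 4)).
by rewrite -[RHS]y_root !(rmorphM, rmorphD) /=; ring.
Qed.

Let y_in_Qadj : in_Qadj alpha y.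
Proof. by rewrite /y; in_Qadj. Qed.

Let t_in_Qadj : in_Qadj alpha t.
Proof. by rewrite /t /y; in_Qadj. Qed.

Let deg_half_y : size (minCpoly (y / 2)) = 5.
Proof.
rewrite -deg_alpha; apply: size_minCpoly_Qadj_eq; first by in_Qadj.
by rewrite (_ : alpha = 2 * (y / 2) + 1); [in_Qadj | rewrite /y; field].
Qed.

Let y_poly_t :
  y = 2^-1 * V^-1 * V^-1
      * (t ^+ 3 - U * t ^+ 2 + V * (3 * A + 6) * t - 2 * V ^+ 2 * (A + 4)).
Proof.
have : y * t != 0 by rewrite y_mul_t rmorphN mulf_neq0 ?oppr_eq0 ?pnatr_eq0.
rewrite mulf_eq0 negb_or => /andP[_ t_neq0]; apply: (mulIf t_neq0).
rewrite y_mul_t rmorphN /= -[LHS]addr0 -(mul0r (2^-1 * V^-1 * V^-1)) -t_quartic.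
by field; rewrite V_neq0.
Qed.

Let deg_half_t : size (minCpoly (t / 2)) = 5.
Proof.
rewrite -deg_alpha; apply: size_minCpoly_Qadj_eq; first by in_Qadj.
have -> : alpha = y + 1 by rewrite /y subrK.
set s := t / 2; rewrite y_poly_t (_ : t = 2 * s); last by rewrite /s; field.
by in_Qadj.
Qed.

Let half_y_notAint : y / 2 \notin Aint.
Proof.
apply: (@quartic_half_coef_notAint _ (a + 4) (v%:~R / 4) (u%:~R / 4)
  ((3 * a + 6)%:~R / 4)).
- by move: a_odd; lia.
- exact: deg_half_y.
rewrite !fmorph_div /= !ratr_int !ratr_nat -(mul0r 16^-1) -y_root.
by rewrite !(rmorphM, rmorphD) /=; field.
Qed.

Let half_t_notAint : t / 2 \notin Aint.
Proof.
apply: (@quartic_half_coef_notAint _ (- u) ((v ^+ 3)%:~R / 4)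
  ((- (v ^+ 2 * (a + 4)))%:~R / 4) ((v * (3 * a + 6))%:~R / 4)).
- by move: u_odd; lia.
- exact: deg_half_t.
rewrite !fmorph_div /= !ratr_int !ratr_nat -(mul0r 16^-1) -t_quartic.
by rewrite !(rmorphN, rmorphM, rmorphD, rmorphXn) /=; field.
Qed.

Lemma shifted_quartic_not_monogenic : ~ monogenic alpha.
Proof.
apply: (F2_obstruction_not_monogenic _ _ _ half_y_notAint half_t_notAint y_mul_t t_conic).
- by rewrite deg_alpha.
- by split; [apply: y_in_Qadj | apply: y_Aint].
- by split; [apply: t_in_Qadj | apply: t_Aint].
- by split; move: a_odd u_odd v_odd; lia.
Qed.

End ShiftedQuartic.

Lemma mod8_conditions_shift_params (a b c : int) :
  [/\ (a = 1 %[mod 8])%Z, (b = 3 %[mod 8])%Z & (c = 7 %[mod 8])%Z]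
   \/ ((a = 5 %[mod 8])%Z /\
       (((b = 3 %[mod 8])%Z /\ (c = 3 %[mod 8])%Z) \/
        ((b = 7 %[mod 8])%Z /\ (c = 7 %[mod 8])%Z)))
   \/ [/\ (a = 7 %[mod 8])%Z, (c = 7 %[mod 8])%Z & (b = 5 %[mod 8])%Z] ->
  exists u v : int, [/\ (a %% 2 = 1)%Z, (u %% 2 = 1)%Z, (v %% 2 = 1)%Z,
    b = 2 * u - 3 * a - 4 & c = 4 * v - 2 * u + 2 * a + 3].
Proof.
move=> cong; exists ((3 * a + b + 4) %/ 2)%Z, ((1 + a + b + c) %/ 4)%Z.
by case: cong => [[]|[[? [[]|[]]]|[]]] *; split; lia.
Qed.

Theorem corollary2p2 (a b c : int) (alpha : algC) :
  let F : {poly int} := 'X^4 + a%:P * 'X^3 + b%:P * 'X + c%:P in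
  irreducible_poly (map_poly intr F : {poly rat}) ->
  root (map_poly intr F) alpha ->
  ([/\ (a = 1 %[mod 8])%Z, (b = 3 %[mod 8])%Z & (c = 7 %[mod 8])%Z]
   \/ ((a = 5 %[mod 8])%Z /\
       (((b = 3 %[mod 8])%Z /\ (c = 3 %[mod 8])%Z) \/
        ((b = 7 %[mod 8])%Z /\ (c = 7 %[mod 8])%Z)))
   \/ [/\ (a = 7 %[mod 8])%Z, (c = 7 %[mod 8])%Z & (b = 5 %[mod 8])%Z]) ->
  ~ monogenic alpha.
Proof.
move=> F F_irr F_alpha /mod8_conditions_shift_params[u [v [a_odd u_odd v_odd Db Dc]]].
have DF : F = quartic c b 0 a by rewrite quarticE polyC0 mul0r addr0.
have deg_alpha : size (minCpoly alpha) = 5.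
  rewrite (minCpoly_irreducible F_irr) ?pQtoC_intr //; last first.
    by rewrite DF; apply/monic_map/quartic_monic.
  by rewrite DF map_quartic size_quartic.
apply: (shifted_quartic_not_monogenic a_odd u_odd v_odd deg_alpha).
move: F_alpha; rewrite DF /root map_quartic horner_quartic Dc Db => /eqP <-.
by rewrite !(rmorphB, rmorphD, rmorphM) /=; ring.
Qed.
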